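(* Let $G$ be a group, $X$ a $G$-bornological coarse space and $A,B$ invariant subsets of $X$ with $A\cup B=X$. Assume that the square of inclusions $$\begin{array}{ccc}A\cap B&\to&A\\ \downarrow&&\downarrow\\ B&\to&X\end{array}$$ (all subsets with the induced structures) is a push-out in the category $G\mathbf{BC}$ of $G$-bornological coarse spaces, that $A$ and $A\cap B$ are nice in $X$, and that $V[A]\cap B$ is nice in $X$ for a cofinal family of invariant coarse entourages $V$ of $X$. Then the pair $(A,B)$ is coarsely excisive.
   Context: A bornological coarse space is a set with a coarse structure (entourages containing the diagonal, closed under subsets, finite unions, inverses and composition) and a compatible bornology ($U[B]$ bounded for entourages $U$ and bounded $B$); morphisms are controlled and proper maps. A $G$-bornological coarse space is one with an action of $G$ by automorphisms such that the invariant entourages are cofinal in the coarse structure. For an entourage $U$ and a subset $C$, $U[C]=\{x\mid \exists c\in C: (x,c)\in U\}$. A subset $C$ of $X$ is nice if for every invariant coarse entourage $U$ of $X$ containing the diagonal the inclusion $C\to U[C]$ (induced structures) is a coarse equivalence. A pair $(A,B)$ of invariant subsets with $A\cup B=X$ is coarsely excisive if $A$ and $A\cap B$ are nice in $X$, $V[A]\cap B$ is nice in $X$ for a cofinal family of invariant entourages $V$ of $X$, and for every coarse entourage $U$ of $X$ there exists a coarse entourage $V$ with $U[A]\cap U[B]\subseteq V[A\cap B]$. *)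

From Stdlib Require Import ProofIrrelevance.
Set Implicit Arguments.
Unset Strict Implicit.

Record Group := {
  gcar :> Type;
  gmul : gcar -> gcar -> gcar;
  gone : gcar;
  ginv : gcar -> gcar;
  gmulA : forall a b c, gmul a (gmul b c) = gmul (gmul a b) c;
  gmul1 : forall a, gmul gone a = a;
  gmulV : forall a, gmul (ginv a) a = gone }.

Definition rel (T : Type) := T -> T -> Prop.
Definition diag (T : Type) : rel T := fun x y => x = y.
Definition rinv (T : Type) (U : rel T) : rel T := fun x y => U y x.
Definition rcomp (T : Type) (U V : rel T) : rel T :=
  fun x z => exists y, U x y /\ V y z.
Definition runion (T : Type) (U V : rel T) : rel T := fun x y => U x y \/ V x y.
Definition rsub (T : Type) (U V : rel T) := forall x y, U x y -> V x y.
Definition thicken (T : Type) (U : rel T) (C : T -> Prop) : T -> Prop :=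
  fun x => exists c, C c /\ U x c.
Definition cap (T : Type) (A B : T -> Prop) : T -> Prop := fun x => A x /\ B x.
Definition rimage (T T' : Type) (f : T -> T') (U : rel T) : rel T' :=
  fun x' y' => exists x y, U x y /\ f x = x' /\ f y = y'.

Record is_coarse_structure (T : Type) (C : rel T -> Prop) : Prop := {
  cs_diag : C (@diag T);
  cs_sub : forall U V, rsub U V -> C V -> C U;
  cs_union : forall U V, C U -> C V -> C (runion U V);
  cs_inv : forall U, C U -> C (rinv U);
  cs_comp : forall U V, C U -> C V -> C (rcomp U V) }.

Record is_bornology (T : Type) (B : (T -> Prop) -> Prop) : Prop := {
  b_empty : B (fun _ => False);
  b_pt : forall x, B (fun y => y = x);
  b_sub : forall P Q, (forall x, P x -> Q x) -> B Q -> B P;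
  b_union : forall P Q, B P -> B Q -> B (fun x => P x \/ Q x) }.

Definition invariant_rel (G : Group) (T : Type) (act : G -> T -> T) (V : rel T) :=
  forall (g : G) x y, V x y -> V (act g x) (act g y).

(** G-bornological coarse spaces: bornological coarse space with a G-action
    by automorphisms (each [act g] controlled and proper; its inverse is
    [act (ginv g)]) such that invariant entourages are cofinal. *)
Record GBC (G : Group) := {
  car :> Type;
  act : G -> car -> car;
  coarse : rel car -> Prop;
  born : (car -> Prop) -> Prop;
  coarse_ax : is_coarse_structure coarse;
  born_ax : is_bornology born;
  compat : forall U P, coarse U -> born P -> born (thicken U P);
  act_one : forall x, act (@gone G) x = x;
  act_mul : forall g h x, act (@gmul G g h) x = act g (act h x);
  act_controlled : forall g U, coarse U -> coarse (rimage (act g) U);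
  act_proper : forall g P, born P -> born (fun x => P (act g x));
  inv_cofinal : forall U, coarse U ->
     exists V, coarse V /\ invariant_rel act V /\ rsub U V }.

Arguments car {G} _.
Arguments act {G} _ _ _.
Arguments coarse {G} _ _.
Arguments born {G} _ _.

Definition invariant_set (G : Group) (X : GBC G) (C : X -> Prop) :=
  forall (g : G) x, C x -> C (act X g x).

Definition is_mor (G : Group) (X Y : GBC G) (f : X -> Y) : Prop :=
  (forall (g : G) x, f (act X g x) = act Y g (f x)) /\
  (forall U, coarse X U -> coarse Y (rimage f U)) /\
  (forall P, born Y P -> born X (fun x => P (f x))).

Definition close (G : Group) (X Y : GBC G) (f f' : X -> Y) : Prop :=
  coarse Y (fun y z => exists x, y = f x /\ z = f' x).

Definition coarse_equiv (G : Group) (X Y : GBC G) (f : X -> Y) : Prop :=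
  is_mor f /\ exists h : Y -> X, is_mor h /\
    close (fun x => h (f x)) (fun x => x) /\ close (fun y => f (h y)) (fun y => y).

Section Sub.
Variables (G : Group) (X : GBC G) (Y : X -> Prop) (HY : invariant_set Y).

Definition sub_car := {x : car X | Y x}.
Definition sub_act (g : G) (p : sub_car) : sub_car :=
  exist _ (act X g (proj1_sig p)) (HY g (proj2_sig p)).
Definition sub_coarse (U : rel sub_car) : Prop :=
  exists V, coarse X V /\ forall p q, U p q -> V (proj1_sig p) (proj1_sig q).
Definition sub_born (P : sub_car -> Prop) : Prop :=
  exists Q, born X Q /\ forall p, P p -> Q (proj1_sig p).

Lemma sub_eq (p q : sub_car) : proj1_sig p = proj1_sig q -> p = q.
Proof.
destruct p as [x hx], q as [y hy]; simpl; intros ->.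
f_equal; apply proof_irrelevance.
Qed.

Lemma sub_coarse_ax : is_coarse_structure sub_coarse.
Proof.
pose proof (coarse_ax X) as C.
split.
- exists (@diag X); split; [apply (cs_diag C)|]. intros p q ->; reflexivity.
- intros U V HUV [W [HW HVW]]; exists W; split; auto.
- intros U V [W1 [H1 K1]] [W2 [H2 K2]]; exists (runion W1 W2); split.
  + apply (cs_union C); auto.
  + intros p q [h|h]; [left|right]; auto.
- intros U [W [H K]]; exists (rinv W); split; [apply (cs_inv C); auto|].
  intros p q h; apply K; exact h.
- intros U V [W1 [H1 K1]] [W2 [H2 K2]]; exists (rcomp W1 W2); split.
  + apply (cs_comp C); auto.
  + intros p q [r [h1 h2]]; exists (proj1_sig r); split; [apply K1|apply K2]; assumption.
Qed.

Lemma sub_born_ax : is_bornology sub_born.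
Proof.
pose proof (born_ax X) as B.
split.
- exists (fun _ => False); split; [apply (b_empty B)|]; auto.
- intros p; exists (fun y => y = proj1_sig p); split; [apply (b_pt B)|].
  intros q ->; reflexivity.
- intros P Q HPQ [R [HR K]]; exists R; split; auto.
- intros P Q [R1 [H1 K1]] [R2 [H2 K2]]; exists (fun x => R1 x \/ R2 x); split.
  + apply (b_union B); auto.
  + intros p [h|h]; [left|right]; auto.
Qed.

Lemma sub_compat U P : sub_coarse U -> sub_born P -> sub_born (thicken U P).
Proof.
intros [V [HV KV]] [Q [HQ KQ]]; exists (thicken V Q); split.
- apply compat; auto.
- intros p [c [hc hu]]; exists (proj1_sig c); split; auto.
Qed.

Lemma sub_act_one p : sub_act (@gone G) p = p.
Proof. apply sub_eq; simpl; apply act_one. Qed.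

Lemma sub_act_mul g h p : sub_act (@gmul G g h) p = sub_act g (sub_act h p).
Proof. apply sub_eq; simpl; apply act_mul. Qed.

Lemma sub_act_controlled g U : sub_coarse U -> sub_coarse (rimage (sub_act g) U).
Proof.
intros [V [HV K]]; exists (rimage (act X g) V); split.
- apply act_controlled; auto.
- intros p' q' [p [q [h [<- <-]]]]; exists (proj1_sig p), (proj1_sig q); simpl; auto.
Qed.

Lemma sub_act_proper g P : sub_born P -> sub_born (fun x => P (sub_act g x)).
Proof.
intros [Q [HQ K]]; exists (fun x => Q (act X g x)); split.
- apply act_proper; auto.
- intros p h; exact (K _ h).
Qed.

Lemma sub_inv_cofinal U : sub_coarse U ->
  exists V, sub_coarse V /\ invariant_rel sub_act V /\ rsub U V.
Proof.
intros [V [HV K]]; destruct (inv_cofinal HV) as [W [HW [IW SW]]].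
exists (fun p q => W (proj1_sig p) (proj1_sig q)); split; [|split].
- exists W; split; auto.
- intros g p q h; apply IW; exact h.
- intros p q h; apply SW, K, h.
Qed.

Definition subGBC : GBC G := {|
  car := sub_car; act := sub_act; coarse := sub_coarse; born := sub_born;
  coarse_ax := sub_coarse_ax; born_ax := sub_born_ax; compat := sub_compat;
  act_one := sub_act_one; act_mul := sub_act_mul;
  act_controlled := sub_act_controlled; act_proper := sub_act_proper;
  inv_cofinal := sub_inv_cofinal |}.

End Sub.

Arguments subGBC {G X Y} HY.

Definition incl (G : Group) (X : GBC G) (Y1 Y2 : X -> Prop)
  (H1 : invariant_set Y1) (H2 : invariant_set Y2) (s : forall x, Y1 x -> Y2 x)
  : subGBC H1 -> subGBC H2 :=
  fun p => exist _ (proj1_sig p) (s _ (proj2_sig p)).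

Arguments incl {G X Y1 Y2} H1 H2 s _.

Definition nice (G : Group) (X : GBC G) (C : X -> Prop) : Prop :=
  invariant_set C /\
  forall U, coarse X U -> invariant_rel (act X) U -> rsub (@diag X) U ->
  forall (HC : invariant_set C) (HUC : invariant_set (thicken U C))
         (s : forall x, C x -> thicken U C x),
  coarse_equiv (incl HC HUC s).

Definition is_pushout (G : Group) (X : GBC G) (A B : X -> Prop)
  (HA : invariant_set A) (HB : invariant_set B) (HAB : invariant_set (cap A B)) : Prop :=
  forall (Z : GBC G) (f : subGBC HA -> Z) (g : subGBC HB -> Z),
    is_mor f -> is_mor g ->
    (forall p : subGBC HAB,
       f (incl HAB HA (fun x (H : cap A B x) => proj1 H) p) =
       g (incl HAB HB (fun x (H : cap A B x) => proj2 H) p)) ->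
    exists h : X -> Z, is_mor h /\
      (forall p : subGBC HA, h (proj1_sig p) = f p) /\
      (forall p : subGBC HB, h (proj1_sig p) = g p) /\
      (forall h' : X -> Z, is_mor h' ->
         (forall p : subGBC HA, h' (proj1_sig p) = f p) ->
         (forall p : subGBC HB, h' (proj1_sig p) = g p) ->
         forall x, h' x = h x).

Definition coarsely_excisive (G : Group) (X : GBC G) (A B : X -> Prop) : Prop :=
  invariant_set A /\ invariant_set B /\ (forall x, A x \/ B x) /\
  nice A /\ nice (cap A B) /\
  (forall U, coarse X U -> exists V, coarse X V /\ invariant_rel (act X) V /\
       rsub U V /\ nice (cap (thicken V A) B)) /\
  (forall U, coarse X U -> exists V, coarse X V /\
       forall x, thicken U A x -> thicken U B x -> thicken V (cap A B) x).

From Stdlib Require Import Lia.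

(* The inclusions of A and of B into X', the space X with the coarse structure
   generated by the entourages of X restricted to A and to B, agree on A ∩ B, so
   the push-out property yields a morphism X -> X' which, as A ∪ B = X, is the
   identity.  Hence every entourage of X lies in a finite composite of entourages
   supported on A or on B.  A chain of such steps from a point of A to a point of
   B has a first step leaving A, and it starts in A ∩ B: this gives the estimate
   U[A] ∩ U[B] ⊆ V[A ∩ B]; the other conditions of excisiveness are hypotheses. *)

Fixpoint rel_pow {T : Type} (R : rel T) (n : nat) : rel T :=
  match n with 0 => @diag T | S n => rcomp R (rel_pow R n) end.

Section RelPow.
Context {T : Type}.
Implicit Types R Q : rel T.

Lemma rsub_runion_l R Q : rsub R (runion R Q).
Proof. intros x y h; left; exact h. Qed.

Lemma rsub_runion_r R Q : rsub Q (runion R Q).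
Proof. intros x y h; right; exact h. Qed.

Lemma rel_pow1 R : rsub R (rel_pow R 1).
Proof. intros x y h; exists y; split; [exact h | reflexivity]. Qed.

Lemma rel_pow_mono R Q n : rsub R Q -> rsub (rel_pow R n) (rel_pow Q n).
Proof.
intros HRQ; induction n as [|n IH]; simpl; intros x y h; [exact h |].
destruct h as [z [h1 h2]]; exists z; split; auto.
Qed.

Lemma rel_pow_add R n m : rsub (rcomp (rel_pow R n) (rel_pow R m)) (rel_pow R (n + m)).
Proof.
induction n as [|n IH]; simpl; intros x z [y [h1 h2]].
- unfold diag in h1; subst; exact h2.
- destruct h1 as [w [h3 h4]]; exists w; split; [exact h3 |].
  apply IH; exists y; split; assumption.
Qed.

Lemma rel_pow_refl R n : rsub (@diag T) R -> rsub (@diag T) (rel_pow R n).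
Proof.
intros Hrefl; induction n as [|n IH]; simpl; intros x y h; [exact h |].
exists x; split; [apply Hrefl; reflexivity | exact (IH x y h)].
Qed.

Lemma rel_pow_le R n m : rsub (@diag T) R -> n <= m -> rsub (rel_pow R n) (rel_pow R m).
Proof.
intros Hrefl Hnm x y h; replace m with (n + (m - n)) by lia.
apply rel_pow_add; exists y; split; [exact h | apply rel_pow_refl; [exact Hrefl | reflexivity]].
Qed.

Lemma rel_pow_rinv R Q n : rsub (rinv R) Q -> rsub (rinv (rel_pow R n)) (rel_pow Q n).
Proof.
intros HRQ; induction n as [|n IH]; intros x y h.
- symmetry; exact h.
- destruct h as [w [h1 h2]].
  replace (S n) with (n + 1) by lia; apply rel_pow_add.
  exists w; split; [exact (IH x w h2) | apply rel_pow1, HRQ, h1].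
Qed.

End RelPow.

Lemma rel_pow_map (T T' : Type) (f : T -> T') (R : rel T) (R' : rel T') n :
  (forall x y, R x y -> R' (f x) (f y)) ->
  forall x y, rel_pow R n x y -> rel_pow R' n (f x) (f y).
Proof.
intros Hf; induction n as [|n IH]; simpl; intros x y h.
- rewrite h; reflexivity.
- destruct h as [w [h1 h2]]; exists (f w); split; auto.
Qed.

Lemma coarse_rel_pow (G : Group) (X : GBC G) (R : rel X) n :
  coarse X R -> coarse X (rel_pow R n).
Proof.
intros HR; induction n as [|n IH]; simpl.
- apply (cs_diag (coarse_ax X)).
- apply (cs_comp (coarse_ax X)); assumption.
Qed.

Lemma coarse_union_diag (G : Group) (X : GBC G) (V : rel X) :
  coarse X V -> coarse X (runion (@diag X) V).
Proof. intros HV; apply (cs_union (coarse_ax X)); [apply (cs_diag (coarse_ax X)) | exact HV]. Qed.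

Section Piecewise.
Context {G : Group} {X : GBC G} {A B : X -> Prop}.

Definition piece_rel (V : rel X) : rel X :=
  fun x y => x = y \/ (V x y /\ A x /\ A y) \/ (V x y /\ B x /\ B y).

Definition piecewise_coarse (U : rel X) : Prop :=
  exists V n, coarse X V /\ rsub U (rel_pow (piece_rel V) n).

Lemma piece_rel_refl V : rsub (@diag X) (piece_rel V).
Proof. intros x y h; left; exact h. Qed.

Lemma piece_rel_mono V W : rsub V W -> rsub (piece_rel V) (piece_rel W).
Proof. intros HVW x y [h|[h|h]]; unfold piece_rel; intuition. Qed.

Lemma piece_rel_sub V : rsub (piece_rel V) (runion (@diag X) V).
Proof. intros x y [h|[h|h]]; [left | right | right]; tauto. Qed.

Lemma piece_rel_rinv V : rsub (rinv (piece_rel V)) (piece_rel (rinv V)).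
Proof. intros x y [h|[h|h]]; unfold piece_rel, rinv; [left; symmetry|right; left|right; right]; tauto. Qed.

Lemma piece_rel_map (f : X -> X) (V W : rel X) :
  (forall x, A x -> A (f x)) -> (forall x, B x -> B (f x)) ->
  (forall x y, V x y -> W (f x) (f y)) ->
  forall x y, piece_rel V x y -> piece_rel W (f x) (f y).
Proof.
intros fA fB fV x y [h|[h|h]]; unfold piece_rel.
- left; rewrite h; reflexivity.
- right; left; repeat split; apply fA || apply fV; tauto.
- right; right; repeat split; apply fB || apply fV; tauto.
Qed.

Lemma piecewise_coarse_coarse U : piecewise_coarse U -> coarse X U.
Proof.
intros [V [n [HV HU]]].
apply (cs_sub (coarse_ax X)) with (rel_pow (runion (@diag X) V) n).
- intros x y h; eapply rel_pow_mono; [apply piece_rel_sub | apply HU, h].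
- apply coarse_rel_pow, coarse_union_diag, HV.
Qed.

Lemma piece_rel_pow_union_l V1 V2 n1 n2 :
  rsub (rel_pow (piece_rel V1) n1) (rel_pow (piece_rel (runion V1 V2)) (n1 + n2)).
Proof.
intros x y h; apply rel_pow_le with n1; [apply piece_rel_refl | lia |].
eapply rel_pow_mono; [apply piece_rel_mono; apply rsub_runion_l | exact h].
Qed.

Lemma piece_rel_pow_union_r V1 V2 n1 n2 :
  rsub (rel_pow (piece_rel V2) n2) (rel_pow (piece_rel (runion V1 V2)) (n1 + n2)).
Proof.
intros x y h; apply rel_pow_le with n2; [apply piece_rel_refl | lia |].
eapply rel_pow_mono; [apply piece_rel_mono; apply rsub_runion_r | exact h].
Qed.

Lemma piecewise_coarse_ax : is_coarse_structure piecewise_coarse.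
Proof.
pose proof (coarse_ax X) as C.
split.
- exists (@diag X), 0; split; [apply (cs_diag C) | intros x y h; exact h].
- intros U V HUV [W [n [HW h]]]; exists W, n; split; auto; intros x y e; auto.
- intros U V [V1 [n1 [H1 K1]]] [V2 [n2 [H2 K2]]].
  exists (runion V1 V2), (n1 + n2); split; [apply (cs_union C); assumption |].
  intros x y [h|h]; [apply piece_rel_pow_union_l, K1 | apply piece_rel_pow_union_r, K2];
    exact h.
- intros U [V [n [HV K]]]; exists (rinv V), n; split; [apply (cs_inv C), HV |].
  intros x y h; eapply rel_pow_rinv; [apply piece_rel_rinv | apply K, h].
- intros U V [V1 [n1 [H1 K1]]] [V2 [n2 [H2 K2]]].
  exists (runion V1 V2), (n1 + n2); split; [apply (cs_union C); assumption |].
  intros x z [y [h1 h2]]; apply rel_pow_add; exists y; split;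
    (eapply rel_pow_mono; [apply piece_rel_mono |]);
    [apply rsub_runion_l | apply K1, h1 | apply rsub_runion_r | apply K2, h2].
Qed.

Hypotheses (HA : invariant_set A) (HB : invariant_set B).

Lemma piece_rel_pow_act (g : G) (V W : rel X) n :
  (forall x y, V x y -> W (act X g x) (act X g y)) ->
  forall x y, rel_pow (piece_rel V) n x y ->
              rel_pow (piece_rel W) n (act X g x) (act X g y).
Proof. intros HVW; apply rel_pow_map, piece_rel_map; auto. Qed.

Lemma piecewise_act_controlled g U :
  piecewise_coarse U -> piecewise_coarse (rimage (act X g) U).
Proof.
intros [V [n [HV K]]]; exists (rimage (act X g) V), n; split.
- apply act_controlled, HV.
- intros x' y' [x [y [h [<- <-]]]]; apply (piece_rel_pow_act g V); [| apply K, h].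
  intros a b hab; exists a, b; auto.
Qed.

Lemma piecewise_inv_cofinal U : piecewise_coarse U ->
  exists V, piecewise_coarse V /\ invariant_rel (act X) V /\ rsub U V.
Proof.
intros [V [n [HV K]]]; destruct (inv_cofinal HV) as [W [HW [IW SW]]].
exists (rel_pow (piece_rel W) n); split; [| split].
- exists W, n; split; [exact HW | intros x y h; exact h].
- intros g; apply piece_rel_pow_act, IW.
- intros x y h; eapply rel_pow_mono; [apply piece_rel_mono, SW | apply K, h].
Qed.

Definition piecewiseGBC : GBC G := {|
  car := car X; act := act X; coarse := piecewise_coarse; born := born X;
  coarse_ax := piecewise_coarse_ax; born_ax := @born_ax G X;
  compat := fun U P HU => compat (piecewise_coarse_coarse _ HU);
  act_one := @act_one G X; act_mul := @act_mul G X;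
  act_controlled := piecewise_act_controlled; act_proper := @act_proper G X;
  inv_cofinal := piecewise_inv_cofinal |}.

Lemma incl_piecewise_mor (C : X -> Prop) (HC : invariant_set C) :
  (forall x, C x -> A x) \/ (forall x, C x -> B x) ->
  is_mor (X := subGBC HC) (Y := piecewiseGBC) (fun p => proj1_sig p).
Proof.
intros HCAB; split; [| split].
- intros g p; reflexivity.
- intros U [V [HV K]]; exists V, 1; split; [exact HV |].
  intros x y [p [q [h [<- <-]]]]; apply rel_pow1; right.
  destruct HCAB as [HCin|HCin]; [left | right];
    (split; [apply K, h | split; apply HCin, proj2_sig]).
- intros P HP; exists P; split; [exact HP | intros p h; exact h].
Qed.

Lemma piecewise_coarse_of_pushout (HAB : invariant_set (cap A B))
  (Hcov : forall x, A x \/ B x) (Hpo : is_pushout HA HB HAB) U :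
  coarse X U -> piecewise_coarse U.
Proof.
intros HU.
destruct (Hpo piecewiseGBC _ _ (incl_piecewise_mor _ HA (or_introl (fun x h => h)))
                               (incl_piecewise_mor _ HB (or_intror (fun x h => h)))
                               (fun p => eq_refl))
  as [h [[_ [h_controlled _]] [hA [hB _]]]].
assert (h_id : forall x, h x = x).
{ intros x; destruct (Hcov x) as [a|b]; [exact (hA (exist _ x a)) | exact (hB (exist _ x b))]. }
apply (cs_sub piecewise_coarse_ax) with (rimage h U); [| exact (h_controlled U HU)].
intros x y hxy; exists x, y; rewrite !h_id; auto.
Qed.

Lemma piece_rel_pow_cross V n a b :
  rel_pow (piece_rel V) n a b -> A a -> B b ->
  exists c, cap A B c /\ rel_pow (runion (@diag X) V) n a c.
Proof.
revert a; induction n as [|n IH]; intros a h ha hb.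
- exists b; rewrite h in ha |- *; split; [split; assumption | reflexivity].
- destruct h as [y [[e|[[hV [_ hy]]|[_ [hBa _]]]] h]].
  + rewrite <- e in h; destruct (IH a h ha hb) as [c [hc hac]].
    exists c; split; [exact hc |]; exists a; split; [left; reflexivity | exact hac].
  + destruct (IH y h hy hb) as [c [hc hyc]].
    exists c; split; [exact hc |]; exists y; split; [right; exact hV | exact hyc].
  + exists a; split; [split; assumption |].
    apply rel_pow_refl; [apply rsub_runion_l | reflexivity].
Qed.

Lemma excision_of_piecewise (Hpw : forall U, coarse X U -> piecewise_coarse U) U :
  coarse X U -> exists V, coarse X V /\
    forall x, thicken U A x -> thicken U B x -> thicken V (cap A B) x.
Proof.
intros HU.
assert (HUU : coarse X (rcomp (rinv U) U))
  by (apply (cs_comp (coarse_ax X)); [apply (cs_inv (coarse_ax X)) |]; exact HU).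
destruct (Hpw _ HUU) as [V [n [HV K]]].
exists (rcomp U (rel_pow (runion (@diag X) V) n)); split.
- apply (cs_comp (coarse_ax X)); [exact HU |].
  apply coarse_rel_pow, coarse_union_diag, HV.
- intros x [a [ha hxa]] [b [hb hxb]].
  destruct (piece_rel_pow_cross _ _ _ _ (K a b (ex_intro _ x (conj hxa hxb))) ha hb)
    as [c [hc hac]].
  exists c; split; [exact hc |]; exists a; split; assumption.
Qed.

End Piecewise.

Theorem lemma3p7 (G : Group) (X : GBC G) (A B : X -> Prop)
  (HA : invariant_set A) (HB : invariant_set B) (HAB : invariant_set (cap A B))
  (Hcov : forall x, A x \/ B x)
  (Hpo : is_pushout HA HB HAB)
  (HnA : nice A) (HnAB : nice (cap A B))
  (HnV : forall U, coarse X U -> exists V, coarse X V /\ invariant_rel (act X) V /\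
           rsub U V /\ nice (cap (thicken V A) B)) :
  coarsely_excisive A B.
Proof.
refine (conj HA (conj HB (conj Hcov (conj HnA (conj HnAB (conj HnV _)))))).
exact (excision_of_piecewise (piecewise_coarse_of_pushout HA HB HAB Hcov Hpo)).
Qed.
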